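(* Let $\mathbb M$ be the single-sample mechanism described in the context, let $\rho^a,\rho^b\in\mathbb R^M_{>0}$, and let $M_a=\{j\in M:\rho^a_j\ge\rho^b_j\}$ and $M_b=\{j\in M:\rho^a_j\le\rho^b_j\}$. Then $${\rm LW}^{\mathbb M(\rho^a,\rho^b)}+{\rm LW}^{\mathbb M(\rho^b,\rho^a)}\ \ge\ {\rm LW}^{{\rm PCA}(M_a,\rho^a)}+{\rm LW}^{{\rm PCA}(M_b,\rho^b)}.$$
   Context: Market model. Buyers $N_0=\{1,\dots,n\}$, sellers $M=\{1,\dots,m\}$, bipartite edge set $E\subseteq N_0\times M$; edge $(i,j)$ written $ij$; $E_S$ is the set of edges incident to participants in $S$ ($E_i=E_{\{i\}}$); $w(F)=\sum_{e\in F}w_e$. Each seller $j$ has a monotone submodular $f_j:2^{E_j}\to\mathbb R_+$ with $f_j(\emptyset)=0$, polymatroid $P_j=\{y\in\mathbb R^{E_j}_+:y(F)\le f_j(F)\ \forall F\}$ ($f_j(E_j)$ = her total amount of a homogeneous divisible good). Buyer $i$ has per-unit valuation $v_i>0$ and budget $B_i\ge0$ (fixed). For an allocation with seller valuations $\rho$ in a market with seller set $M'$: $x_i=w(E_i)$ for buyers, $x_j=f_j(E_j)-w(E_j)$ for sellers, ${\rm LW}=\sum_{i\in N_0}\min(v_ix_i,B_i)+\sum_{j\in M'}\rho_jx_j$. Polyhedral Clinching Auction ${\rm PCA}$ with step $\varepsilon>0$ on a market with sellers $M'$ and seller bids $\sigma_j$: for each $j\in M'$ add a virtual buyer $n+j$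 adjacent only to $j$ with bid $\sigma_j$ and budget $\infty$; extend $f_j$ by $f_j(F)=f_j(E_j)$ if $(n+j)j\in F$; let $N$ be all (real and virtual) buyers, $P'=\{w\ge0: w|_{E_j}\in P_j\ \forall j\in M'\}$ (extended $P_j$), using only edges to sellers in $M'$. Bids $v'_i$ (virtual $n+j$: $\sigma_j$) are assumed positive multiples of $\varepsilon$. State: $w,p,r$, clocks $c_i$, demands $d_i$; initially $w=0,p=0,r=0,c_i=0,d_i=\infty$, $l$ = first buyer. With $P_{w,d}=\{y\ge0:w+y\in P',\ y(E_k)\le d_k\ \forall k\}$ and $P^i_{w,d}(\xi)=\{u\in\mathbb R^{N\setminus\{i\}}_+:\exists y\in P_{w,d},y|_{E_i}=\xi,y(E_k)=u_k\ \forall k\ne i\}$: while some $d_i\ne0$: (1) for each buyer $i$ in turn choose a maximal $\xi_i\in\mathbb R^{E_i}_+$ with $P^i_{w,d}(\xi_i)=P^i_{w,d}(0)$, set $p_i\leftarrow p_i+c_i\xi_i(E_i)$, $w\leftarrow w+\xi_i$, reset every $d_k=(B_k-p_k)/c_k$ if $c_k<v'_k$ else $0$ ($\infty$ while $c_k=0$); then $r_j\leftarrow r_j+\sum_{ij\in E_j}c_i\xi_{ij}$; (2) $c_l\leftarrow c_l+\varepsilon$, update $d_l$ likewise; (3) advance $l$ cyclically. Output: $w$, $p$ for real buyers, revenues $r_j-p_{n+j}$. ${\rm LW}^{{\rm PCA}(M',\sigma)}$ denotes the LW, in the submarket with seller set $M'$ (edges to $M'$ only, constraint $P'$) and seller valuations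 $\sigma$, of the allocation output by PCA when all participants bid truthfully (buyers bid $v$, sellers $\sigma$). Mechanism $\mathbb M$ (given buyers' bids $v'$, budgets $B$, sellers' bids $\rho'$, samples $\rho^s$): $\tilde M=\{j:\rho^s_j\ge\rho'_j\}$, $\tilde E=\{ij\in E:j\in\tilde M\}$; run PCA on sellers $\tilde M$, edges $\tilde E$, bids $v'$, budgets $B$, seller bids $\sigma_j=\rho^s_j$, obtaining $(w,p,r)$; output $w$ on $\tilde E$ and $0$ elsewhere, payments $p_i$, revenues $\rho^s_j\,w(\tilde E_j)$ for $j\in\tilde M$ and $0$ otherwise. ${\rm LW}^{\mathbb M(\rho^a,\rho^b)}$ is the LW in the full market, evaluated at seller valuations $\rho^a$, of the allocation output by $\mathbb M$ when all participants bid truthfully ($v'=v$, $\rho'=\rho^a$) and the samples are $\rho^b$ (sellers not in $\tilde M$ keep all their goods). *)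

From mathcomp Require Import all_boot all_order all_algebra.
Set Implicit Arguments. Unset Strict Implicit. Unset Printing Implicit Defensive.
Import Order.TTheory GRing.Theory Num.Theory.
Local Open Scope ring_scope.

(* f j : {set 'I_n * 'I_m} -> R, only ever evaluated on subsets of E_j.     *)

Section Market.
Variable R : realFieldType.
Variables n m : nat.
Variable E : {set 'I_n * 'I_m}.
Variable f : 'I_m -> {set 'I_n * 'I_m} -> R.

Definition Eseller (j : 'I_m) : {set 'I_n * 'I_m} := [set e in E | e.2 == j].
Definition Ebuyer (i : 'I_n) : {set 'I_n * 'I_m} := [set e in E | e.1 == i].

Definition seller_fun_ok : Prop :=
  forall j : 'I_m,
    [/\ f j set0 = 0,
        (forall F : {set 'I_n * 'I_m}, F \subset Eseller j -> 0 <= f j F),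
        (forall F G : {set 'I_n * 'I_m}, F \subset G -> G \subset Eseller j -> f j F <= f j G)
      & (forall F G : {set 'I_n * 'I_m}, F \subset Eseller j -> G \subset Eseller j ->
           f j (F :|: G) + f j (F :&: G) <= f j F + f j G)].

(* Buyers of PCA: inl i = real buyer i, inr j = virtual buyer n+j.         *)
Local Notation buyerT := ('I_n + 'I_m)%type.
Local Notation edgeT := (('I_n + 'I_m) * 'I_m)%type.

Section PCA.
Variable Ms : {set 'I_m}.
Variable v' : 'I_n -> R.
Variable Bud : 'I_n -> R.
Variable sigma : 'I_m -> R.
Variable eps : R.

(* N = real buyers followed by the virtual buyers n+j, j \in M' *)
Definition inN (k : buyerT) : bool :=
  match k with inl _ => true | inr j => j \in Ms end.
Definition Nseq : seq buyerT := [seq k <- enum {: buyerT} | inN k].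

Definition Eext : {set edgeT} :=
  [set e : edgeT | (e.2 \in Ms) &&
     match e.1 with inl i => (i, e.2) \in E | inr j => j == e.2 end].
Definition Eext_b (k : buyerT) : {set edgeT} := [set e in Eext | e.1 == k].
Definition Eext_s (j : 'I_m) : {set edgeT} := [set e in Eext | e.2 == j].

Definition fext (j : 'I_m) (F : {set edgeT}) : R :=
  if (inr j, j) \in F then f j (Eseller j)
  else f j [set e : 'I_n * 'I_m | (inl e.1, e.2) \in F].

Definition vsum (y : edgeT -> R) (F : {set edgeT}) : R := \sum_(e in F) y e.

Definition inP' (y : edgeT -> R) : Prop :=
  (forall e, e \in Eext -> 0 <= y e) /\
  (forall j, j \in Ms -> forall F : {set edgeT}, F \subset Eext_s j ->
      vsum y F <= fext j F).

(* bids and budgets of all PCA buyers (budget None = infinity) *)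
Definition bid (k : buyerT) : R :=
  match k with inl i => v' i | inr j => sigma j end.
Definition budget (k : buyerT) : option R :=
  match k with inl i => Some (Bud i) | inr _ => None end.

(* PCA state; the demands d are not stored, since by the rules of the
   algorithm d_k is always the function [demand] of (c_k, p_k). *)
Record state := State {
  st_w : edgeT -> R;
  st_p : buyerT -> R;
  st_r : 'I_m -> R;
  st_c : buyerT -> R;
  st_l : nat (* index in Nseq of the current buyer l *) }.

(* None = infinity *)
Definition demand (s : state) (k : buyerT) : option R :=
  let c := st_c s k in
  if c == 0 then None
  else if c < bid k then
    match budget k with
    | None => None
    | Some b => Some ((b - st_p s k) / c)
    end
  else Some 0.

Definition le_dem (x : R) (d : option R) : Prop :=
  match d with None => True | Some b => x <= b end.

Definition inPwd (s : state) (y : edgeT -> R) : Prop :=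
  (forall e, e \in Eext -> 0 <= y e) /\
  inP' (fun e => st_w s e + y e) /\
  (forall k, inN k -> le_dem (vsum y (Eext_b k)) (demand s k)).

(* u \in P^i_{w,d}(xi); u : buyerT -> R, only its values on N \ {i} matter *)
Definition inPi (s : state) (i : buyerT) (xi : edgeT -> R) (u : buyerT -> R)
  : Prop :=
  (forall k, inN k -> k != i -> 0 <= u k) /\
  exists y, inPwd s y /\
    (forall e, e \in Eext_b i -> y e = xi e) /\
    (forall k, inN k -> k != i -> vsum y (Eext_b k) = u k).

Definition clinchable (s : state) (i : buyerT) (xi : edgeT -> R) : Prop :=
  (forall e, e \in Eext_b i -> 0 <= xi e) /\
  (forall e, e \notin Eext_b i -> xi e = 0) /\
  (forall u, inPi s i xi u <-> inPi s i (fun _ => 0) u).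

Definition max_clinch (s : state) (i : buyerT) (xi : edgeT -> R) : Prop :=
  clinchable s i xi /\
  forall xi', clinchable s i xi' -> (forall e, xi e <= xi' e) ->
    forall e, xi' e = xi e.

Definition clinch_upd (s : state) (i : buyerT) (xi : edgeT -> R) : state :=
  State (fun e => st_w s e + xi e)
        (fun k => if k == i then st_p s k + st_c s k * vsum xi (Eext_b k)
                  else st_p s k)
        (fun j => st_r s j + \sum_(e in Eext_s j) st_c s e.1 * xi e)
        (st_c s) (st_l s).

Inductive clinch_all : seq buyerT -> state -> state -> Prop :=
| clinch_nil s : clinch_all [::] s s
| clinch_cons i rest s xi s' :
    max_clinch s i xi -> clinch_all rest (clinch_upd s i xi) s' ->
    clinch_all (i :: rest) s s'.

Definition raise (s : state) : state :=
  State (st_w s) (st_p s) (st_r s)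
        (fun k => st_c s k +
                  (if inN k && (index k Nseq == st_l s) then eps else 0))
        ((st_l s).+1 %% size Nseq).

Definition round (s s' : state) : Prop :=
  exists s1, clinch_all Nseq s s1 /\ s' = raise s1.

Definition init_state : state :=
  State (fun _ => 0) (fun _ => 0) (fun _ => 0) (fun _ => 0) 0.

Definition active (s : state) : Prop :=
  exists k, inN k /\ demand s k <> Some 0.

Inductive reachable : state -> Prop :=
| reach_init : reachable init_state
| reach_step s s' : reachable s -> active s -> round s s' -> reachable s'.

Definition pca_run (s : state) : Prop := reachable s /\ ~ active s.

Definition pca_alloc (s : state) : edgeT -> R := st_w s.
Definition pca_pay (s : state) (i : 'I_n) : R := st_p s (inl i).
Definition pca_rev (s : state) (j : 'I_m) : R := st_r s j - st_p s (inr j).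

End PCA.

Variable v : 'I_n -> R.     (* true per-unit valuations *)
Variable Bud : 'I_n -> R.

Definition LW (Ms : {set 'I_m}) (rho : 'I_m -> R) (a : 'I_n * 'I_m -> R) : R :=
  \sum_(i < n) Num.min (v i * \sum_(e in Ebuyer i) a e) (Bud i) +
  \sum_(j in Ms) rho j * (f j (Eseller j) - \sum_(e in Eseller j) a e).

Definition real_alloc (Ms : {set 'I_m}) (w : edgeT -> R) : 'I_n * 'I_m -> R :=
  fun e => if (e.2 \in Ms) && (e \in E) then w (inl e.1, e.2) else 0.

Definition LW_PCA (Ms : {set 'I_m}) (sigma : 'I_m -> R) (s : state) : R :=
  LW Ms sigma (real_alloc Ms (pca_alloc s)).

Definition Mtilde (rho' rhos : 'I_m -> R) : {set 'I_m} :=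
  [set j | rho' j <= rhos j].

Definition mech_run (vb : 'I_n -> R) (eps : R) (rho' rhos : 'I_m -> R)
  (s : state) : Prop :=
  pca_run (Mtilde rho' rhos) vb Bud rhos eps s.

(* allocation output by M (0 outside tilde E; sellers outside Mtilde keep
   all their goods) *)
Definition mech_alloc (rho' rhos : 'I_m -> R) (s : state) : 'I_n * 'I_m -> R :=
  real_alloc (Mtilde rho' rhos) (pca_alloc s).

(* LW^{M(rho^a, rho^b)}: truthful bids rho' = rho^a, samples rho^b, full
   market, evaluated at rho^a; s is the final state of M's PCA run *)
Definition LW_mech (rhoa rhob : 'I_m -> R) (s : state) : R :=
  LW setT rhoa (mech_alloc rhoa rhob s).

End Market.

Definition mult_of (R : realFieldType) (eps x : R) : Prop :=
  exists k : nat, x = k%:R * eps.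

From mathcomp Require Import all_boot all_order all_algebra.
From mathcomp Require Import lra.
Set Implicit Arguments. Unset Strict Implicit. Unset Printing Implicit Defensive.
Import Order.TTheory GRing.Theory Num.Theory.
Local Open Scope ring_scope.

(* The buyers' parts of the four liquid welfares coincide: the run inside
   M(rho^b, rho^a) is the PCA on M_a with seller bids rho^a, and the run
   inside M(rho^a, rho^b) the PCA on M_b with bids rho^b.  So the claim is an
   inequality between sellers' parts, which holds seller by seller: a seller j
   with rho^a_j > rho^b_j sells nothing in the run on M_b and keeps its whole
   supply F there, so if it sells S >= 0 on M_a, the inequality for j reads
   rho^a_j (F - S) <= rho^a_j F + rho^b_j (F - S), that is
   0 <= rho^b_j F + (rho^a_j - rho^b_j) S; symmetrically for
   rho^a_j < rho^b_j, and for rho^a_j = rho^b_j both sides agree. *)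

Lemma seller_surplus_swap_le (R : realFieldType) (a b F SA SB : R) :
  0 <= a -> 0 <= b -> 0 <= F -> 0 <= SA -> 0 <= SB ->
  (a < b -> SA = 0) -> (b < a -> SB = 0) ->
  (if b <= a then a * (F - SA) else 0) + (if a <= b then b * (F - SB) else 0)
    <= a * (F - SB) + b * (F - SA).
Proof.
move=> a_ge0 b_ge0 F_ge0 SA_ge0 SB_ge0 SA0 SB0.
case: (ltgtP a b) => [ab | ba | <-]; last by rewrite addrC.
- by rewrite SA0 // add0r; nra.
- by rewrite SB0 // addr0; nra.
Qed.

Section PCARun.
Variables (R : realFieldType) (n m : nat) (E : {set 'I_n * 'I_m}).
Variable f : 'I_m -> {set 'I_n * 'I_m} -> R.
Variables (Ms : {set 'I_m}) (v' Bud : 'I_n -> R) (sigma : 'I_m -> R).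

Lemma clinch_all_w_ge0 (N : seq ('I_n + 'I_m)) s s' :
  clinch_all E f Ms v' Bud sigma N s s' ->
  (forall e, 0 <= st_w s e) -> forall e, 0 <= st_w s' e.
Proof.
elim=> [//|i N0 s0 xi s1 [[xi_ge0 [xi_out _]] _] _ IH] w_ge0.
apply: IH => e /=; case: (boolP (e \in Eext_b E Ms i)) => Ee.
- by rewrite addr_ge0 ?w_ge0 ?xi_ge0.
- by rewrite xi_out // addr0.
Qed.

Lemma reachable_w_ge0 (eps : R) s :
  reachable E f Ms v' Bud sigma eps s -> forall e, 0 <= st_w s e.
Proof.
elim=> [//|s0 s1 _ IH _ [s2 [clinch ->]]].
exact: clinch_all_w_ge0 clinch IH.
Qed.

End PCARun.

Section Welfare.
Variables (R : realFieldType) (n m : nat) (E : {set 'I_n * 'I_m}).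
Variable f : 'I_m -> {set 'I_n * 'I_m} -> R.
Variables (v Bud : 'I_n -> R).

Lemma sum_real_alloc_ge0 (Ms : {set 'I_m}) (w : ('I_n + 'I_m) * 'I_m -> R)
    (F : {set 'I_n * 'I_m}) :
  (forall e, 0 <= w e) -> 0 <= \sum_(e in F) real_alloc E Ms w e.
Proof.
by move=> w_ge0; apply: sumr_ge0 => e _; rewrite /real_alloc; case: ifP.
Qed.

Lemma sum_real_alloc_notin (Ms : {set 'I_m}) (w : ('I_n + 'I_m) * 'I_m -> R) j :
  j \notin Ms ->
  \sum_(e in Eseller E j) real_alloc E Ms w e = 0.
Proof.
move=> jNMs; apply: big1 => e; rewrite inE => /andP[_ /eqP e2j].
by rewrite /real_alloc e2j (negbTE jNMs).
Qed.

Lemma LW_sample_swap (rhoa rhob : 'I_m -> R) (wA wB : _ -> R) :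
  (forall j, 0 <= f j (Eseller E j)) ->
  (forall j, 0 <= rhoa j) -> (forall j, 0 <= rhob j) ->
  (forall e, 0 <= wA e) -> (forall e, 0 <= wB e) ->
  LW E f v Bud (Mtilde rhob rhoa) rhoa (real_alloc E (Mtilde rhob rhoa) wA) +
  LW E f v Bud (Mtilde rhoa rhob) rhob (real_alloc E (Mtilde rhoa rhob) wB) <=
  LW E f v Bud setT rhoa (real_alloc E (Mtilde rhoa rhob) wB) +
  LW E f v Bud setT rhob (real_alloc E (Mtilde rhob rhoa) wA).
Proof.
move=> F_ge0 rhoa_ge0 rhob_ge0 wA_ge0 wB_ge0.
set Ma := Mtilde rhob rhoa; set Mb := Mtilde rhoa rhob.
set aA := real_alloc E Ma wA; set aB := real_alloc E Mb wB.
have sellers_le :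
    \sum_(j in Ma) rhoa j * (f j (Eseller E j) -
       \sum_(e in Eseller E j) aA e) +
    \sum_(j in Mb) rhob j * (f j (Eseller E j) -
       \sum_(e in Eseller E j) aB e) <=
    \sum_(j in setT) rhoa j * (f j (Eseller E j) -
       \sum_(e in Eseller E j) aB e) +
    \sum_(j in setT) rhob j * (f j (Eseller E j) -
       \sum_(e in Eseller E j) aA e).
  rewrite [X in X + _ <= _]big_mkcond [X in _ + X <= _]big_mkcond.
  rewrite [X in _ <= X + _]big_mkcond [X in _ <= _ + X]big_mkcond.
  rewrite -!big_split /=; apply: ler_sum => j _.
  rewrite !in_setT !inE; apply: seller_surplus_swap_le;
    rewrite ?sum_real_alloc_ge0 //.
  - by move=> ab; apply: sum_real_alloc_notin; rewrite inE -ltNge.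
  - by move=> ba; apply: sum_real_alloc_notin; rewrite inE -ltNge.
rewrite /LW; lra.
Qed.

End Welfare.

Theorem lemma4p6 (R : realFieldType) (n m : nat) (E : {set 'I_n * 'I_m})
  (f : 'I_m -> {set 'I_n * 'I_m} -> R) (v Bud : 'I_n -> R) (eps : R)
  (rhoa rhob : 'I_m -> R) (sA sB : state R n m) :
  seller_fun_ok E f ->
  0 < eps ->
  (forall i, 0 < v i) -> (forall i, 0 <= Bud i) ->
  (forall j, 0 < rhoa j) -> (forall j, 0 < rhob j) ->
  (forall i, mult_of eps (v i)) ->
  (forall j, mult_of eps (rhoa j)) -> (forall j, mult_of eps (rhob j)) ->
  let Ma := [set j | rhoa j >= rhob j] in
  let Mb := [set j | rhoa j <= rhob j] in
  mech_run E f Bud v eps rhob rhoa sA ->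
  mech_run E f Bud v eps rhoa rhob sB ->
  LW_mech E f v Bud rhoa rhob sB + LW_mech E f v Bud rhob rhoa sA >=
  LW_PCA E f v Bud Ma rhoa sA + LW_PCA E f v Bud Mb rhob sB.
Proof.
move=> f_ok _ _ _ rhoa_gt0 rhob_gt0 _ _ _ Ma Mb [reachA _] [reachB _].
have supply_ge0 j : 0 <= f j (Eseller E j).
  by case: (f_ok j) => _ f_ge0 _ _; apply: f_ge0.
have rhoa_ge0 j : 0 <= rhoa j by exact/ltW.
have rhob_ge0 j : 0 <= rhob j by exact/ltW.
exact: LW_sample_swap supply_ge0 rhoa_ge0 rhob_ge0
  (reachable_w_ge0 reachA) (reachable_w_ge0 reachB).
Qed.
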